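(* Let $t \geq 2$ and $n \geq 1$ be integers, let $x = \left[\frac{nt-1}{t-1}\right]$ and $q = [x/t]$. Then $$R_{t-1,t}(K_{1,n}) = \begin{cases} x & \text{if } x = tq+1 \text{ with } x \text{ and } q \text{ both odd},\\ x+1 & \text{otherwise.}\end{cases}$$
   Context: $[a]$ denotes the integer part (floor) of a real number $a$. $K_{1,n}$ is the star with $n$ edges. For a graph $G$ and integers $1 \leq s < t$, $R_{s,t}(G)$ is the smallest positive integer $N$ such that every coloring of the edges of the complete graph $K_N$ with $t$ colors contains a (not necessarily induced) subgraph isomorphic to $G$ whose edges use at most $s$ distinct colors. *)

From mathcomp Require Import all_boot.
Set Implicit Arguments. Unset Strict Implicit. Unset Printing Implicit Defensive.

(* A simple graph on a finite vertex type: an edge relation (assumed symmetric,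
   irreflexive by the users; we only use it through its edge pairs). *)

(* A t-coloring of the edges of K_N: a symmetric map on pairs of vertices;
   values on the diagonal are irrelevant (never used, since embeddings are
   injective and graph edges join distinct vertices). *)
Definition edge_coloring (N t : nat) := 'I_N -> 'I_N -> 'I_t.
Definition sym_coloring N t (c : edge_coloring N t) := forall i j, c i j = c j i.

Definition used_colors (V : finType) (e : rel V) N t (c : edge_coloring N t)
  (f : V -> 'I_N) : {set 'I_t} :=
  [set c (f u) (f v) | u in V, v in V & e u v].

Definition has_few_colored_copy (V : finType) (e : rel V) N t s
  (c : edge_coloring N t) : Prop :=
  exists f : V -> 'I_N, injective f /\ #|used_colors e c f| <= s.

Definition ramsey_prop (V : finType) (e : rel V) (s t N : nat) : Prop :=
  forall c : edge_coloring N t, sym_coloring c -> has_few_colored_copy e s c.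

Definition is_Rst (V : finType) (e : rel V) (s t R : nat) : Prop :=
  0 < R /\ ramsey_prop e s t R /\
  forall N, 0 < N -> ramsey_prop e s t N -> R <= N.

Definition star_rel (n : nat) : rel 'I_n.+1 :=
  fun u v => ((val u == 0) && (val v != 0)) || ((val v == 0) && (val u != 0)).
Arguments star_rel n : clear implicits.

From mathcomp Require Import all_boot zify.

Set Implicit Arguments. Unset Strict Implicit. Unset Printing Implicit Defensive.

(* In a symmetric t-colouring c of K_N, a copy of K_{1,n} with at most t-1
   colours exists iff some vertex v has at most N-1-n neighbours w with
   c(v,w) = k for some colour k: the leaves are then taken among the other
   neighbours of v.  Upper bounds: the N-1 edges at a vertex are shared by t
   colours, so some colour is rare as soon as N-1 < t(N-n); in the borderline
   case N-1 = t(N-n) with N and N-n odd, the only bad colourings have every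
   colour class (N-n)-regular on N vertices, which the handshake lemma
   forbids.  Lower bounds: reducing mod t an "edge label" in which every
   vertex sees every label below t*m gives each colour at least m times at
   every vertex.  For m even the label is the cyclic distance minus one
   (each distance occurs twice around a vertex); for m odd it comes from the
   near 1-factorisation (i+j)/2 mod M of K_M, M odd. *)

Lemma sum_ge_const_eq (I : finType) (F : I -> nat) m :
  (forall i, m <= F i) -> \sum_i F i <= #|I| * m -> forall i, F i = m.
Proof.
move=> ge_m le_sum i; apply/eqP; rewrite eqn_leq ge_m andbT -subn_eq0.
have: \sum_j (F j - m) == 0 by rewrite sumnB // sum_nat_const subn_eq0.
by rewrite sum_nat_eq0 => /forallP/(_ i).
Qed.

Lemma ramsey_prop_le (V : finType) (e : rel V) s t N M :
  N <= M -> ramsey_prop e s t N -> ramsey_prop e s t M.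
Proof.
move=> le_NM RN c c_sym.
pose c' : edge_coloring N t := fun i j => c (widen_ord le_NM i) (widen_ord le_NM j).
have [|f [f_inj few]] := RN c'; first by move=> i j; rewrite /c' c_sym.
exists (widen_ord le_NM \o f); split=> //.
by move=> i j /(congr1 val) /= /val_inj /f_inj.
Qed.

Lemma is_RstP (V : finType) (e : rel V) s t R : 0 < R ->
  ramsey_prop e s t R -> ~ ramsey_prop e s t R.-1 -> is_Rst e s t R.
Proof.
move=> R_gt0 RR notR; split=> //; split=> // N _ RN.
by rewrite leqNgt; apply/negP => lt_NR; apply/notR/(ramsey_prop_le _ RN); lia.
Qed.

Section ColoredNeighbourhoods.

Variables (N t : nat) (c : edge_coloring N t).

Definition colored_nbhd (v : 'I_N) (k : 'I_t) : {set 'I_N} :=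
  [set w | (w != v) && (c v w == k)].

Lemma sum_card_colored_nbhd v : \sum_(k < t) #|colored_nbhd v k| = N.-1.
Proof.
have -> : N.-1 = #|[set~ v]| by rewrite cardsC1 card_ord.
rewrite -sum1_card (partition_big (c v) predT) //=; apply: eq_bigr => k _.
by rewrite -sum1_card; apply: eq_bigl => w; rewrite !inE.
Qed.

Lemma card_colored_nbhdC v k :
  #|colored_nbhd v k| + #|[set~ v] :\: colored_nbhd v k| = N.-1.
Proof.
have <- : #|[set~ v]| = N.-1 by rewrite cardsC1 card_ord.
rewrite -(cardsID (colored_nbhd v k) [set~ v]).
suff /setIidPr -> : colored_nbhd v k \subset [set~ v] by [].
by apply/subsetP => w; rewrite !inE => /andP[].
Qed.

Hypotheses (c_sym : sym_coloring c) (t_gt0 : 0 < t).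

Lemma sum_card_colored_nbhd_even k : ~~ odd (\sum_(v < N) #|colored_nbhd v k|).
Proof.
have split_lt v : #|colored_nbhd v k| =
    \sum_(w < N) ((w < v) && (c v w == k) : nat) +
    \sum_(w < N) ((v < w) && (c v w == k) : nat).
  rewrite -big_split -sum1_card big_mkcond /=; apply: eq_bigr => w _.
  by rewrite inE -val_eqE /=; case: ltngtP; case: (c v w == k).
rewrite (eq_bigr _ (fun v _ => split_lt v)) big_split /= [X in _ + X]exchange_big.
under [X in _ + X]eq_bigr do under eq_bigr do rewrite c_sym.
by rewrite addnn odd_double.
Qed.

Lemma star_copyP n : has_few_colored_copy (star_rel n) (t - 1) c <->
  exists v k, #|colored_nbhd v k| + n <= N.-1.
Proof.
split=> [[f [f_inj few]] | [v [k small]]].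
  have [k _ k_unused] : exists2 k, k \in [set: 'I_t] & k \notin used_colors (star_rel n) c f.
    apply/subsetPn; apply: contraTN few => /subset_leq_card.
    by rewrite cardsT card_ord; lia.
  exists (f ord0), k.
  set L := [set f (lift ord0 i) | i : 'I_n].
  have cardL : #|L| = n by rewrite card_imset ?card_ord // => i j /f_inj /lift_inj.
  rewrite -(card_colored_nbhdC (f ord0) k) leq_add2l -[X in X <= _]cardL.
  apply/subset_leq_card/subsetP => _ /imsetP[i _ ->]; rewrite !inE.
  rewrite (inj_eq f_inj) eq_sym neq_lift andbT /=; apply: contra k_unused => /eqP <-.
  by apply/imset2P; exists ord0 (lift ord0 i); rewrite ?inE.
set B := [set~ v] :\: colored_nbhd v k.
have n_le_B : n <= #|B| by rewrite -(leq_add2l #|colored_nbhd v k|) card_colored_nbhdC.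
pose f (i : 'I_n.+1) :=
  if unlift ord0 i is Some j then enum_val (widen_ord n_le_B j) else v.
have f_center : f ord0 = v by rewrite /f unlift_none.
have [leaf_ne_v leaf_color] :
    (forall j, f (lift ord0 j) != v) /\ (forall j, c v (f (lift ord0 j)) != k).
  have f_leaf j : f (lift ord0 j) \in B by rewrite /f liftK; apply: enum_valP.
  by split=> j; move: (f_leaf j); rewrite !inE; case: (_ != v); rewrite ?andbF ?andbT.
exists f; split.
  move=> i j; case: (unliftP ord0 i) => [i' ->|->]; case: (unliftP ord0 j) => [j' ->|->] //.
  - by rewrite /f !liftK => /enum_val_inj [/val_inj ->].
  - by rewrite f_center => /eqP; rewrite (negbTE (leaf_ne_v i')).
  - by rewrite f_center => /esym/eqP; rewrite (negbTE (leaf_ne_v j')).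
have -> : t - 1 = #|[set~ k]| by rewrite cardsC1 card_ord subn1.
apply/subset_leq_card/subsetP => y /imset2P[u w _]; rewrite inE /star_rel => uw ->.
have centerP (i : 'I_n.+1) : val i == 0 -> i = ord0 by move/eqP=> i0; apply/val_inj.
have leafP (i : 'I_n.+1) : val i != 0 -> exists j, i = lift ord0 j.
  by case: (unliftP ord0 i) => [j ->|->]; [exists j|].
rewrite !inE; case/andP: uw => _ /orP[] /andP[/centerP -> /leafP[j ->]].
  by rewrite f_center.
by rewrite c_sym f_center.
Qed.

End ColoredNeighbourhoods.

Lemma ramsey_star_pigeonhole n t N : 0 < t -> N.-1 < t * (N - n) ->
  ramsey_prop (star_rel n) (t - 1) t N.
Proof.
move=> t_gt0 lt_N c c_sym; apply/star_copyP => //.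
have v : 'I_N by exists 0; lia.
exists v; have [k small | all_big] := pickP (fun k => #|colored_nbhd c v k| < N - n).
  by exists k; lia.
have := sum_card_colored_nbhd c v.
have : \sum_(k < t) (N - n) <= \sum_(k < t) #|colored_nbhd c v k|.
  by apply: leq_sum => k _; rewrite leqNgt all_big.
rewrite sum_nat_const card_ord; lia.
Qed.

Lemma ramsey_star_parity n t N : 0 < t -> N = t * (N - n) + 1 ->
  odd N -> odd (N - n) -> ramsey_prop (star_rel n) (t - 1) t N.
Proof.
move=> t_gt0 N_eq N_odd m_odd c c_sym; apply/star_copyP => //.
set m := N - n in N_eq m_odd *.
have [[v k] /= small | all_big] :=
  pickP (fun p : 'I_N * 'I_t => #|colored_nbhd c p.1 p.2| < m).
  by exists v, k; have := odd_gt0 m_odd; lia.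
have regular v : #|colored_nbhd c v (Ordinal t_gt0)| = m.
  apply: (sum_ge_const_eq (F := fun k => #|colored_nbhd c v k|)) => [k|].
    by move: (all_big (v, k)) => /= /negbT; rewrite -leqNgt.
  by rewrite sum_card_colored_nbhd card_ord; lia.
have := sum_card_colored_nbhd_even c_sym (Ordinal t_gt0).
by rewrite (eq_bigr _ (fun v _ => regular v)) sum_nat_const card_ord oddM N_odd m_odd.
Qed.

Lemma not_ramsey_star n t N (c : edge_coloring N t) : sym_coloring c -> 0 < t ->
  (forall v k, N - n <= #|colored_nbhd c v k|) -> ~ ramsey_prop (star_rel n) (t - 1) t N.
Proof.
move=> c_sym t_gt0 dense /(_ c c_sym) /(star_copyP c_sym t_gt0) [v [k]].
by have := dense v k; have := ltn_ord v; lia.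
Qed.

Section ModColorings.

Variables (N t : nat) (t_gt0 : 0 < t) (b : nat -> nat -> nat).

Definition mod_coloring : edge_coloring N t :=
  fun i j => Ordinal (ltn_pmod (b i j) t_gt0).

Lemma mod_coloring_sym : (forall i j, b i j = b j i) -> sym_coloring mod_coloring.
Proof. by move=> b_sym i j; apply/val_inj; rewrite /= b_sym. Qed.

(* Colour k at v collects the labels k, k + t, ..., k + (m - 1) t. *)
Lemma mod_coloring_nbhd (v : 'I_N) m (S : finType) (wit : nat -> S -> nat) :
  (forall r s, r < t * m -> [/\ wit r s < N, wit r s != v & b v (wit r s) = r]) ->
  (forall r, r < t * m -> injective (wit r)) ->
  forall k, m * #|S| <= #|colored_nbhd mod_coloring v k|.
Proof.
move=> witP wit_inj k.
pose r (i : 'I_m) := i * t + k.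
have r_lt i : r i < t * m.
  by rewrite /r mulnC; have := ltn_ord i; have := ltn_ord k; nia.
pose g (x : 'I_m * S) : 'I_N := insubd v (wit (r x.1) x.2).
have gE x : val (g x) = wit (r x.1) x.2.
  by rewrite val_insubd; case: (witP _ x.2 (r_lt x.1)) => ->.
have g_inj : injective g.
  move=> [i s] [i' s'] /(congr1 val); rewrite !gE /= => same.
  have ii' : i = i'.
    apply/val_inj/eqP; move/(congr1 (b v)): same.
    case: (witP _ s (r_lt i)) => _ _ ->; case: (witP _ s' (r_lt i')) => _ _ ->.
    by rewrite /r => /eqP; rewrite eqn_add2r eqn_mul2r (gtn_eqF t_gt0).
  by move: same; rewrite ii' => /(wit_inj _ (r_lt i')) ->.
have <- : #|[set: 'I_m * S]| = m * #|S| by rewrite cardsT card_prod card_ord.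
rewrite -(card_imset _ g_inj); apply/subset_leq_card/subsetP => _ /imsetP[[i s] _ ->].
have [_ wit_ne_v b_wit] := witP _ s (r_lt i).
rewrite inE -val_eqE gE wit_ne_v -val_eqE /= gE b_wit /r modnMDl modn_small //.
Qed.

End ModColorings.

Definition cyclic_dist N (i j : nat) :=
  let d := maxn i j - minn i j in minn d (N - d).

Definition cyclic_add N v d := if v + d < N then v + d else v + d - N.
Definition cyclic_sub N v d := if d <= v then v - d else v + N - d.

Section CyclicNeighbours.

Variables (N v d : nat).
Hypotheses (v_lt : v < N) (d_gt0 : 0 < d) (d2_lt : d.*2 < N).

Lemma cyclic_addP :
  [/\ cyclic_add N v d < N, cyclic_add N v d != v & cyclic_dist N v (cyclic_add N v d) = d].
Proof. by rewrite /cyclic_add /cyclic_dist /=; case: (ltnP (v + d) N) => ?; split; lia. Qed.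

Lemma cyclic_subP :
  [/\ cyclic_sub N v d < N, cyclic_sub N v d != v & cyclic_dist N v (cyclic_sub N v d) = d].
Proof. by rewrite /cyclic_sub /cyclic_dist /=; case: (leqP d v) => ?; split; lia. Qed.

Lemma cyclic_add_sub_neq : cyclic_add N v d != cyclic_sub N v d.
Proof.
by rewrite /cyclic_add /cyclic_sub; case: (ltnP (v + d) N) => ?; case: (leqP d v) => ?; lia.
Qed.

End CyclicNeighbours.

Lemma cyclic_coloring_dense N t (t_gt0 : 0 < t) h : (t * h).*2 < N ->
  let c := mod_coloring (N := N) t_gt0 (fun i j => (cyclic_dist N i j).-1) in
  sym_coloring c /\ forall v k, h.*2 <= #|colored_nbhd c v k|.
Proof.
move=> th_lt c; split.
  by apply: mod_coloring_sym => i j; rewrite /cyclic_dist /= maxnC (minnC i).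
move=> v k; rewrite -muln2 -card_bool.
pose wit r (s : bool) := if s then cyclic_add N v r.+1 else cyclic_sub N v r.+1.
have d2_lt r : r < t * h -> r.+1.*2 < N by lia.
apply: (mod_coloring_nbhd t_gt0 (wit := wit)) => [r [] /d2_lt d2 | r /d2_lt d2].
- by case: (cyclic_addP (ltn_ord v) (ltn0Sn r) d2) => -> -> ->.
- by case: (cyclic_subP (ltn_ord v) (ltn0Sn r) d2) => -> -> ->.
have add_sub := cyclic_add_sub_neq (ltn_ord v) (ltn0Sn r) d2.
by move=> [] [] //= /eqP; rewrite ?(negbTE add_sub) // eq_sym (negbTE add_sub).
Qed.

(* On 'I_M each label class of (i + j) / 2 mod M is a matching missing exactly
   one vertex; edges leaving 'I_M are labelled by their smaller end. *)
Definition matching_color M (i j : nat) :=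
  if (i < M) && (j < M) then ((i + j) * M.+1./2) %% M else minn i j.

Definition matching_partner M v r :=
  if v < M then (if r == v then M else (r.*2 + M - v) %% M) else r.

Lemma matching_partnerP M N v r : odd M -> M < N -> v < N -> r < M ->
  [/\ matching_partner M v r < N, matching_partner M v r != v
    & matching_color M v (matching_partner M v r) = r].
Proof.
move=> M_odd M_lt v_lt r_lt; have M_gt0 := odd_gt0 M_odd.
have half2 : M.+1./2.*2 = M.+1 by rewrite -[RHS]odd_double_half /= M_odd.
rewrite /matching_partner /matching_color; case: (ltnP v M) => [v_ltM | v_geM]; last first.
  by split; [lia | lia | rewrite r_lt /=; lia].
case: eqP => [-> | r_neq]; first by split; [ | lia | rewrite ltnn /=; lia].
have w_lt := ltn_pmod (r.*2 + M - v) M_gt0.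
have color_w : ((v + (r.*2 + M - v) %% M) * M.+1./2) %% M = r.
  rewrite -modnMml modnDmr.
  have -> : v + (r.*2 + M - v) = r.*2 + M by lia.
  by rewrite modnDr modnMml -doubleMl doubleMr half2 mulnSr modnMDl modn_small.
split; [lia | | by rewrite w_lt].
have color_v : ((v + v) * M.+1./2) %% M = v.
  by rewrite addnn -doubleMl doubleMr half2 mulnSr modnMDl modn_small.
by apply/eqP => w_eq; apply: r_neq; rewrite -color_w w_eq color_v.
Qed.

Lemma matching_coloring_dense N t (t_gt0 : 0 < t) M m :
  odd M -> M < N -> t * m <= M ->
  let c := mod_coloring (N := N) t_gt0 (matching_color M) in
  sym_coloring c /\ forall v k, m <= #|colored_nbhd c v k|.
Proof.
move=> M_odd M_lt tm_le c; split.
  by apply: mod_coloring_sym => i j; rewrite /matching_color addnC andbC minnC.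
move=> v k; rewrite -[m]muln1 -card_unit.
apply: (mod_coloring_nbhd t_gt0 (wit := fun r (_ : unit) => matching_partner M v r)).
  by move=> r _ r_lt; apply: (matching_partnerP M_odd M_lt (ltn_ord v)); lia.
by move=> r _ [] [].
Qed.

Lemma not_ramsey_star_dense n t N : 0 < t -> t * (N - n) < N ->
  (odd N -> (t * (N - n)).+1 = N -> ~~ odd (N - n)) ->
  ~ ramsey_prop (star_rel n) (t - 1) t N.
Proof.
move=> t_gt0 tm_lt parity; set m := N - n in tm_lt parity.
suff [c [c_sym dense]] : exists c : edge_coloring N t,
    sym_coloring c /\ forall v k, m <= #|colored_nbhd c v k|.
  exact: not_ramsey_star c_sym t_gt0 dense.
have [m_odd | m_even] := boolP (odd m).
  (* M is the largest odd number below N. *)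
  pose M := N - (odd N).+1.
  have M_odd : odd M by rewrite oddB; case: (odd N); lia.
  have [M_lt tm_le] : M < N /\ t * m <= M.
    rewrite /M; case N_odd: (odd N); last lia.
    by have := contraTneq (parity N_odd) m_odd; lia.
  by eexists; apply: (matching_coloring_dense t_gt0 M_odd M_lt tm_le).
have m_half : (m./2).*2 = m by rewrite -[RHS]odd_double_half (negbTE m_even).
rewrite -m_half; eexists; apply: (cyclic_coloring_dense t_gt0).
by rewrite doubleMr m_half.
Qed.

Lemma star_index_bounds t n : 1 < t -> 0 < n ->
  let x := (n * t - 1) %/ (t - 1) in n <= x /\ t * (x - n) < x < t * (x - n).+1.
Proof.
move=> t_gt1 n_gt0 x.
have lo : x * (t - 1) <= n * t - 1 by apply: leq_divM.
have hi : n * t - 1 < x.+1 * (t - 1) by apply: ltn_ceil; lia.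
have n_le_x : n <= x by rewrite /x leq_divRL; nia.
by split=> //; apply/andP; split; nia.
Qed.

Theorem theorem3 (t n : nat) : 2 <= t -> 1 <= n ->
  let x := (n * t - 1) %/ (t - 1) in
  let q := x %/ t in
  is_Rst (star_rel n) (t - 1) t
    (if (x == t * q + 1) && odd x && odd q then x else x + 1).
Proof.
move=> t_gt1 n_gt0 x q; have t_gt0 := ltnW t_gt1.
have [n_le_x /andP[x_gt x_lt]] := star_index_bounds t_gt1 n_gt0.
have -> : q = x - n.
  by apply/eqP; rewrite eqn_leq leq_divRL // -ltnS ltn_divLR // !(mulnC _ t) x_lt ltnW.
case: ifPn => [/andP[/andP[/eqP x_eq x_odd] m_odd] | not_exceptional].
  apply: is_RstP; [lia | exact: ramsey_star_parity | apply: not_ramsey_star_dense => //].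
    by have := odd_gt0 m_odd; lia.
  by rewrite -subn1 oddB ?x_odd //; lia.
apply: is_RstP; [lia | apply: ramsey_star_pigeonhole => //; lia | ].
rewrite addn1 /=; apply: not_ramsey_star_dense => // x_odd x_eq.
by apply: contra not_exceptional => m_odd; rewrite x_odd m_odd andbT; apply/eqP; lia.
Qed.
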